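(* Every real binary quartic form $p\in F_{2,4}$ has a unique signature, i.e. $\mathcal B(p)$ has exactly one minimal element with respect to $\preceq$.
   Context: $F_{2,4}$ is the space of real binary forms of degree $4$ in $x,y$. A representation of $p\in F_{2,4}$ is an expression $p=\sum_{j=1}^r\lambda_j(\alpha_jx+\beta_jy)^{4}$ with $r\ge0$ (empty sum $=0$), $\alpha_j,\beta_j\in\mathbb R$, $0\ne\lambda_j\in\mathbb R$; it is honest if the linear forms $\alpha_jx+\beta_jy$ are pairwise non-proportional. Its badge is $(a,b)$ where $a=\#\{j:\lambda_j>0\}$, $b=\#\{j:\lambda_j<0\}$. $\mathcal B(p)$ is the set of badges of honest representations of $p$. Badges are ordered by $(a,b)\preceq(c,d)$ iff $a\le c$ and $b\le d$; a signature of $p$ is a minimal element of $\mathcal B(p)$. *)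

From Stdlib Require Import Reals List.
Import ListNotations.
Open Scope R_scope.

Record F24 : Type := mkF24 { c0 : R; c1 : R; c2 : R; c3 : R; c4 : R }.

Definition F24_eval (p : F24) (x y : R) : R :=
  c0 p * x ^ 4 + c1 p * x ^ 3 * y + c2 p * x ^ 2 * y ^ 2
  + c3 p * x * y ^ 3 + c4 p * y ^ 4.

(* A term of a representation: (lambda, alpha, beta), standing for
   lambda * (alpha x + beta y)^4. *)
Definition term : Type := (R * R * R)%type.
Definition t_lam (t : term) : R := fst (fst t).
Definition t_alpha (t : term) : R := snd (fst t).
Definition t_beta (t : term) : R := snd t.

Definition rep_eval (l : list term) (x y : R) : R :=
  fold_right (fun t acc => t_lam t * (t_alpha t * x + t_beta t * y) ^ 4 + acc) 0 l.

(* l is a representation of p: all lambda_j nonzero and p = sum_j lambda_j (alpha_j x + beta_j y)^4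
   (as forms, equivalently as polynomial functions on R^2). *)
Definition is_rep (p : F24) (l : list term) : Prop :=
  (forall t, In t l -> t_lam t <> 0) /\
  (forall x y, F24_eval p x y = rep_eval l x y).

Definition honest (l : list term) : Prop :=
  forall i j : nat, (i < j)%nat -> (j < length l)%nat ->
    let ti := nth i l (0, 0, 0) in
    let tj := nth j l (0, 0, 0) in
    t_alpha ti * t_beta tj - t_alpha tj * t_beta ti <> 0.

Definition is_honest_rep (p : F24) (l : list term) : Prop :=
  is_rep p l /\ honest l.

Definition posb (r : R) : bool := if Rlt_dec 0 r then true else false.
Definition negb_ (r : R) : bool := if Rlt_dec r 0 then true else false.

Definition badge (l : list term) : nat * nat :=
  (length (filter (fun t => posb (t_lam t)) l),
   length (filter (fun t => negb_ (t_lam t)) l)).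

Definition in_B (p : F24) (s : nat * nat) : Prop :=
  exists l, is_honest_rep p l /\ badge l = s.

Definition badge_le (s t : nat * nat) : Prop :=
  (fst s <= fst t)%nat /\ (snd s <= snd t)%nat.

Definition is_signature (p : F24) (s : nat * nat) : Prop :=
  in_B p s /\ (forall s', in_B p s' -> badge_le s' s -> s' = s).

From Pilot Require Import Defs.
From Stdlib Require Import Reals List Lra Lia Psatz Classical Arith.
Import ListNotations.
Open Scope R_scope.

(* Work in apolar coordinates, where a quartic h carries its catalecticant (Hankel)
   bilinear form cat h on binary quadratic forms, with cat ((a x + b y)^4) u w = u(a,b) w(a,b).

   If h has an honest representation R0 with at most three terms, then
      its badge is below the badge of every honest representation R: otherwise a quadratic
      form u vanishing on the positive terms of R and the negative terms of R0, but not on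
      some positive term of R0, gives cat h u u > 0 and cat h u u <= 0 at the same time.
   2. Classification.  Every quartic has either such a small representation or an honest
      representation with badge (2,2).  The key step (Sylvester's method) turns a fourth
      power plus three or more independent negative terms into three fourth powers, using
      the adjugate of the catalecticant of the negative part; combined with an explicit
      five-term representation and a merging procedure that makes any representation honest
      without lengthening it, a case analysis on the badge gives the classification.
   If a small representation exists its badge is least; otherwise badges with fewer than
   two positive or two negative terms are impossible, so (2,2) is least. *)

(** * Apolar coordinates of binary quartics *)

(* A quartic  m0 x^4 + 4 m1 x^3 y + 6 m2 x^2 y^2 + 4 m3 x y^3 + m4 y^4,  recorded by
   its binomially rescaled coefficients; in these coordinates the fourth power
   (a x + b y)^4 is simply (a^4, a^3 b, a^2 b^2, a b^3, b^4). *)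
Record Quartic := mkQuartic { m0 : R; m1 : R; m2 : R; m3 : R; m4 : R }.

Lemma Quartic_ext (h k : Quartic) :
  m0 h = m0 k -> m1 h = m1 k -> m2 h = m2 k -> m3 h = m3 k -> m4 h = m4 k -> h = k.
Proof. destruct h, k; simpl; intros; subst; reflexivity. Qed.

Definition qadd (h k : Quartic) : Quartic :=
  mkQuartic (m0 h + m0 k) (m1 h + m1 k) (m2 h + m2 k) (m3 h + m3 k) (m4 h + m4 k).
Definition qscale (c : R) (h : Quartic) : Quartic :=
  mkQuartic (c * m0 h) (c * m1 h) (c * m2 h) (c * m3 h) (c * m4 h).
Definition qzero : Quartic := mkQuartic 0 0 0 0 0.

Definition pow4 (a b : R) : Quartic := mkQuartic (a^4) (a^3*b) (a^2*b^2) (a*b^3) (b^4).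
Definition term_pow4 (t : term) : Quartic := pow4 (t_alpha t) (t_beta t).

Definition qsum (l : list term) : Quartic :=
  fold_right (fun t acc => qadd (qscale (t_lam t) (term_pow4 t)) acc) qzero l.

Definition coords (p : F24) : Quartic :=
  mkQuartic (Defs.c0 p) (Defs.c1 p / 4) (Defs.c2 p / 6) (Defs.c3 p / 4) (Defs.c4 p).

Definition qeval (h : Quartic) (x y : R) : R :=
  m0 h * x^4 + 4 * m1 h * x^3 * y + 6 * m2 h * x^2 * y^2 + 4 * m3 h * x * y^3 + m4 h * y^4.

Lemma qeval_qsum (l : list term) (x y : R) : rep_eval l x y = qeval (qsum l) x y.
Proof.
  induction l as [|t l IH]; simpl.
  - unfold qeval; simpl; ring.
  - rewrite IH. unfold qeval, term_pow4, pow4; simpl. ring.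
Qed.

Lemma qeval_coords (p : F24) (x y : R) : F24_eval p x y = qeval (coords p) x y.
Proof. unfold F24_eval, qeval, coords; simpl; field. Qed.

Lemma qeval_injective (h k : Quartic) :
  (forall x y, qeval h x y = qeval k x y) -> h = k.
Proof.
  intros E. pose proof (E 1 0). pose proof (E 0 1). pose proof (E 1 1).
  pose proof (E 1 (-1)). pose proof (E 1 2).
  unfold qeval in *. apply Quartic_ext; nra.
Qed.

Definition nonzero_coeffs (l : list term) : Prop := forall t, In t l -> t_lam t <> 0.

Definition represents (h : Quartic) (l : list term) : Prop := nonzero_coeffs l /\ qsum l = h.

Lemma is_rep_represents (p : F24) (l : list term) : is_rep p l <-> represents (coords p) l.
Proof.
  unfold is_rep, represents; split; intros [Hl Hs]; split; auto.
  - apply qeval_injective; intros x y. rewrite <- qeval_coords, <- qeval_qsum; auto.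
  - intros x y. rewrite qeval_coords, qeval_qsum, Hs. reflexivity.
Qed.

(** * Honest representations *)

Definition dd (a b c d : R) : R := a * d - c * b.

Definition tdet (t u : term) : R := dd (t_alpha t) (t_beta t) (t_alpha u) (t_beta u).

Definition zero_form (t : term) : Prop := t_alpha t = 0 /\ t_beta t = 0.

Lemma tdet_anti (t u : term) : tdet t u = - tdet u t.
Proof. unfold tdet, dd; ring. Qed.

Fixpoint pairwise_indep (l : list term) : Prop :=
  match l with
  | [] => True
  | t :: r => (forall u, In u r -> tdet t u <> 0) /\ pairwise_indep r
  end.

Lemma honest_pairwise_indep (l : list term) : honest l <-> pairwise_indep l.
Proof.
  induction l as [|t l IH]; unfold honest in *; simpl.
  - split; intros; auto. lia.
  - split.
    + intros H. split.
      * intros u Hu. destruct (In_nth l u (0,0,0) Hu) as [j [Hj Hn]].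
        specialize (H 0%nat (S j)). simpl in H. rewrite Hn in H. apply H; lia.
      * apply IH. intros i j Hij Hj. specialize (H (S i) (S j)). simpl in H. apply H; lia.
    + intros [H1 H2] i j Hij Hj. destruct j as [|j]; [lia|].
      destruct i as [|i]; simpl.
      * apply H1. apply nth_In. simpl in Hj; lia.
      * apply IH; auto; simpl in Hj; lia.
Qed.

Lemma pairwise_indep_filter (f : term -> bool) (l : list term) :
  pairwise_indep l -> pairwise_indep (filter f l).
Proof.
  induction l as [|t l IH]; simpl; auto.
  intros [H1 H2]. destruct (f t); simpl; auto.
  split; auto. intros u Hu. apply filter_In in Hu. apply H1; tauto.
Qed.

Lemma pairwise_indep_In (l : list term) (t u : term) :
  pairwise_indep l -> In t l -> In u l -> t <> u -> tdet t u <> 0.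
Proof.
  induction l as [|a l IH]; simpl; [tauto|].
  intros [H1 H2] [->|Ht] [->|Hu] Hne; auto.
  rewrite tdet_anti. intro E. apply (H1 t Ht). lra.
Qed.

Lemma proportional_trans (z y y' : term) :
  ~ zero_form z -> tdet z y = 0 -> tdet z y' = 0 -> tdet y y' = 0.
Proof.
  intros Hz H1 H2.
  assert (Ea : tdet y y' * t_alpha z = t_alpha y * tdet z y' - t_alpha y' * tdet z y)
    by (unfold tdet, dd; ring).
  assert (Eb : tdet y y' * t_beta z = t_beta y * tdet z y' - t_beta y' * tdet z y)
    by (unfold tdet, dd; ring).
  rewrite H1, H2 in Ea, Eb.
  destruct (Req_dec (t_alpha z) 0) as [A|A].
  - destruct (Req_dec (t_beta z) 0) as [B|B]; [unfold zero_form in Hz; tauto|].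
    apply (Rmult_eq_reg_r (t_beta z)); auto. lra.
  - apply (Rmult_eq_reg_r (t_alpha z)); auto. lra.
Qed.

(** Every representation can be made honest without lengthening it:
    proportional terms are merged and vanishing terms dropped. *)

Definition proportional (t u : term) : bool :=
  if Req_EM_T (tdet t u) 0 then true else false.

(* the factor r with (alpha_u, beta_u) = r (alpha_t, beta_t) when u is proportional to t *)
Definition ratio (t u : term) : R :=
  (t_alpha t * t_alpha u + t_beta t * t_beta u) / (t_alpha t ^ 2 + t_beta t ^ 2).

Lemma pow4_proportional (t u : term) : ~ zero_form t -> tdet t u = 0 ->
  term_pow4 u = qscale (ratio t u ^ 4) (term_pow4 t).
Proof.
  intros Hz Hd. unfold tdet, dd in Hd.
  set (n := t_alpha t ^ 2 + t_beta t ^ 2).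
  assert (Hn : n <> 0) by (intro E; apply Hz; unfold n in E; split; nra).
  assert (Hr : ratio t u * n = t_alpha t * t_alpha u + t_beta t * t_beta u)
    by (unfold ratio; fold n; field; auto).
  assert (Ea : t_alpha u = ratio t u * t_alpha t).
  { apply (Rmult_eq_reg_r n); auto.
    replace (ratio t u * t_alpha t * n) with (ratio t u * n * t_alpha t) by ring.
    rewrite Hr. unfold n.
    replace (t_alpha u * (t_alpha t ^ 2 + t_beta t ^ 2)) with
      ((t_alpha t * t_alpha u + t_beta t * t_beta u) * t_alpha t
       - t_beta t * (t_alpha t * t_beta u - t_alpha u * t_beta t)) by ring.
    rewrite Hd. ring. }
  assert (Eb : t_beta u = ratio t u * t_beta t).
  { apply (Rmult_eq_reg_r n); auto.
    replace (ratio t u * t_beta t * n) with (ratio t u * n * t_beta t) by ring.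
    rewrite Hr. unfold n.
    replace (t_beta u * (t_alpha t ^ 2 + t_beta t ^ 2)) with
      ((t_alpha t * t_alpha u + t_beta t * t_beta u) * t_beta t
       + t_alpha t * (t_alpha t * t_beta u - t_alpha u * t_beta t)) by ring.
    rewrite Hd. ring. }
  unfold term_pow4, pow4. rewrite Ea, Eb. apply Quartic_ext; simpl; ring.
Qed.

Definition absorbed (t : term) (l : list term) : R :=
  fold_right (fun u acc =>
    if proportional t u then t_lam u * ratio t u ^ 4 + acc else acc) 0 l.

Lemma qsum_proportional (t : term) (l : list term) : ~ zero_form t ->
  qsum (filter (proportional t) l) = qscale (absorbed t l) (term_pow4 t).
Proof.
  intros Hz. induction l as [|u l IH]; simpl.
  - apply Quartic_ext; simpl; ring.
  - destruct (proportional t u) eqn:Ep; simpl; rewrite IH; [|reflexivity].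
    unfold proportional in Ep. destruct (Req_EM_T (tdet t u) 0) as [E|]; [|discriminate].
    rewrite (pow4_proportional t u Hz E). apply Quartic_ext; simpl; ring.
Qed.

Lemma qsum_filter_split (f : term -> bool) (l : list term) :
  qsum l = qadd (qsum (filter f l)) (qsum (filter (fun u => negb (f u)) l)).
Proof.
  induction l as [|u l IH]; simpl.
  - apply Quartic_ext; simpl; ring.
  - rewrite IH. destruct (f u); simpl; apply Quartic_ext; simpl; ring.
Qed.

Definition clean (l : list term) : Prop :=
  forall t, In t l -> t_lam t <> 0 /\ ~ zero_form t.

Lemma clean_filter (f : term -> bool) (l : list term) : clean l -> clean (filter f l).
Proof. intros H t Ht. apply filter_In in Ht. apply H; tauto. Qed.

Lemma absorb_term (t : term) (l : list term) : clean l -> pairwise_indep l ->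
  exists l', clean l' /\ pairwise_indep l' /\ (length l' <= S (length l))%nat /\
    qsum l' = qadd (qscale (t_lam t) (term_pow4 t)) (qsum l).
Proof.
  intros Hc Hh.
  destruct (classic (zero_form t)) as [[A B]|Hz].
  { exists l. split; [auto|split; [auto|split; [lia|]]].
    unfold term_pow4, pow4. rewrite A, B. apply Quartic_ext; simpl; ring. }
  set (Q := filter (fun u => negb (proportional t u)) l).
  assert (HQ : qsum l = qadd (qscale (absorbed t l) (term_pow4 t)) (qsum Q))
    by (rewrite (qsum_filter_split (proportional t) l), qsum_proportional; auto).
  assert (LQ : (length Q <= length l)%nat) by apply filter_length_le.
  assert (Qt : forall u, In u Q -> tdet t u <> 0).
  { intros u Hu. apply filter_In in Hu. destruct Hu as [_ Hu]. unfold proportional in Hu.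
    destruct (Req_EM_T (tdet t u) 0); [discriminate|auto]. }
  set (c := t_lam t + absorbed t l).
  destruct (Req_EM_T c 0) as [Zc|Zc].
  - exists Q.
    split; [apply clean_filter; auto|split; [apply pairwise_indep_filter; auto|split; [lia|]]].
    rewrite HQ. apply Quartic_ext; unfold c in Zc; simpl; nra.
  - exists ((c, t_alpha t, t_beta t) :: Q). split; [|split; [split|split]].
    + intros u [<-|Hu]; [split; auto|apply (clean_filter _ _ Hc u Hu)].
    + apply Qt.
    + apply pairwise_indep_filter; auto.
    + simpl; lia.
    + rewrite HQ. unfold c. apply Quartic_ext; simpl;
        unfold term_pow4, pow4, t_lam, t_alpha, t_beta; simpl; ring.
Qed.

Lemma make_honest (l : list term) : exists l',
  clean l' /\ pairwise_indep l' /\ (length l' <= length l)%nat /\ qsum l' = qsum l.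
Proof.
  induction l as [|t l IH].
  - exists []. split; [intros t []|simpl; auto].
  - destruct IH as [l' [Hc [Hh [Hl Hs]]]].
    destruct (absorb_term t l' Hc Hh) as [l'' [Hc' [Hh' [Hl' Hs']]]].
    exists l''. split; [auto|split; [auto|split]].
    + simpl; lia.
    + rewrite Hs', Hs. reflexivity.
Qed.

Definition posf (t : term) : bool := posb (t_lam t).
Definition negf (t : term) : bool := negb_ (t_lam t).
Definition cntpos (l : list term) : nat := length (filter posf l).
Definition cntneg (l : list term) : nat := length (filter negf l).

Lemma In_filter_pos (t : term) (l : list term) : In t (filter posf l) <-> In t l /\ 0 < t_lam t.
Proof.
  rewrite filter_In. unfold posf, posb.
  destruct (Rlt_dec 0 (t_lam t)); split; intros []; split; auto; discriminate.
Qed.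

Lemma In_filter_neg (t : term) (l : list term) : In t (filter negf l) <-> In t l /\ t_lam t < 0.
Proof.
  rewrite filter_In. unfold negf, negb_.
  destruct (Rlt_dec (t_lam t) 0); split; intros []; split; auto; discriminate.
Qed.

Lemma count_split (l : list term) : nonzero_coeffs l -> (cntpos l + cntneg l = length l)%nat.
Proof.
  unfold cntpos, cntneg, posf, negf, posb, negb_.
  induction l as [|t l IH]; simpl; intros H; auto.
  assert (Ht : t_lam t <> 0) by (apply H; simpl; auto).
  assert (IH' := IH (fun u Hu => H u (or_intror Hu))).
  destruct (Rlt_dec 0 (t_lam t)); destruct (Rlt_dec (t_lam t) 0); simpl; lra || lia.
Qed.

Lemma qsum_sign_split (l : list term) :
  qsum l = qadd (qsum (filter posf l)) (qsum (filter negf l)).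
Proof.
  unfold posf, negf, posb, negb_.
  induction l as [|t l IH]; simpl.
  - apply Quartic_ext; simpl; ring.
  - rewrite IH. destruct (Rlt_dec 0 (t_lam t)); destruct (Rlt_dec (t_lam t) 0);
      simpl; try lra; apply Quartic_ext; simpl; try ring.
    all: replace (t_lam t) with 0 by lra; ring.
Qed.

(** Negating all coefficients exchanges the roles of the two signs. *)

Definition tneg (t : term) : term := (- t_lam t, t_alpha t, t_beta t).
Definition negL (l : list term) : list term := map tneg l.

Lemma qsum_negL (l : list term) : qsum (negL l) = qscale (-1) (qsum l).
Proof.
  induction l as [|t l IH]; simpl.
  - apply Quartic_ext; simpl; ring.
  - rewrite IH. apply Quartic_ext; unfold tneg, term_pow4, t_lam, t_alpha, t_beta; simpl; ring.
Qed.

Lemma qscale_opp_involutive (h : Quartic) : qscale (-1) (qscale (-1) h) = h.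
Proof. apply Quartic_ext; simpl; ring. Qed.

Lemma pairwise_indep_negL (l : list term) : pairwise_indep l -> pairwise_indep (negL l).
Proof.
  induction l as [|t l IH]; simpl; auto. intros [H1 H2]; split; auto.
  intros u Hu. apply in_map_iff in Hu. destruct Hu as [v [<- Hv]]. apply (H1 v Hv).
Qed.

Lemma cntpos_negL (l : list term) : cntpos (negL l) = cntneg l.
Proof.
  unfold cntpos, cntneg; induction l as [|t l IH]; simpl; auto.
  unfold posf at 1, negf at 1, posb, negb_, tneg, t_lam; simpl.
  destruct (Rlt_dec 0 (- fst (fst t))); destruct (Rlt_dec (fst (fst t)) 0); simpl; lra || lia.
Qed.

Lemma cntneg_negL (l : list term) : cntneg (negL l) = cntpos l.
Proof.
  unfold cntpos, cntneg; induction l as [|t l IH]; simpl; auto.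
  unfold posf at 1, negf at 1, posb, negb_, tneg, t_lam; simpl.
  destruct (Rlt_dec (- fst (fst t)) 0); destruct (Rlt_dec 0 (fst (fst t))); simpl; lra || lia.
Qed.

Lemma clean_negL (l : list term) : clean l -> clean (negL l).
Proof.
  intros H t Ht. apply in_map_iff in Ht. destruct Ht as [v [<- Hv]].
  destruct (H v Hv) as [Hl Hz]. split; [unfold tneg, t_lam in *; simpl; lra|exact Hz].
Qed.

Lemma represents_negL (h : Quartic) (l : list term) :
  represents h l -> represents (qscale (-1) h) (negL l).
Proof.
  intros [Hl Hs]. split.
  - intros t Ht. apply in_map_iff in Ht. destruct Ht as [v [<- Hv]].
    specialize (Hl v Hv). unfold tneg, t_lam in *; simpl; lra.
  - rewrite qsum_negL, Hs. reflexivity.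
Qed.

(** * The catalecticant form *)

Record Quad := mkQuad { v0 : R; v1 : R; v2 : R }.

Definition qval (u : Quad) (a b : R) : R := v0 u * a^2 + v1 u * a * b + v2 u * b^2.
Definition tval (u : Quad) (t : term) : R := qval u (t_alpha t) (t_beta t).

(* The catalecticant (Hankel) bilinear form of h on quadratic forms: its matrix is
   [[m0,m1,m2],[m1,m2,m3],[m2,m3,m4]], so that cat (pow4 a b) u w = u(a,b) w(a,b). *)
Definition cat (h : Quartic) (u w : Quad) : R :=
  v0 u * v0 w * m0 h + (v0 u * v1 w + v1 u * v0 w) * m1 h
  + (v0 u * v2 w + v1 u * v1 w + v2 u * v0 w) * m2 h
  + (v1 u * v2 w + v2 u * v1 w) * m3 h + v2 u * v2 w * m4 h.

Lemma cat_pow4 (a b : R) (u w : Quad) : cat (pow4 a b) u w = qval u a b * qval w a b.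
Proof. unfold cat, pow4, qval; simpl; ring. Qed.

Lemma cat_add (h k : Quartic) (u w : Quad) : cat (qadd h k) u w = cat h u w + cat k u w.
Proof. unfold cat, qadd; simpl; ring. Qed.

Lemma cat_scale (c : R) (h : Quartic) (u w : Quad) : cat (qscale c h) u w = c * cat h u w.
Proof. unfold cat, qscale; simpl; ring. Qed.

Definition wsum (l : list term) (u w : Quad) : R :=
  fold_right (fun t acc => t_lam t * tval u t * tval w t + acc) 0 l.

Lemma cat_qsum (l : list term) (u w : Quad) : cat (qsum l) u w = wsum l u w.
Proof.
  induction l as [|t l IH]; simpl.
  - unfold cat; simpl; ring.
  - rewrite cat_add, cat_scale, IH. unfold term_pow4. rewrite cat_pow4. unfold tval. ring.
Qed.

Lemma wsum_nonpos (l : list term) (u : Quad) :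
  (forall t, In t l -> 0 < t_lam t -> tval u t = 0) -> wsum l u u <= 0.
Proof.
  induction l as [|t l IH]; intros H; simpl; [lra|].
  assert (IH' := IH (fun v Hv => H v (or_intror Hv))).
  destruct (Rlt_dec 0 (t_lam t)) as [P|P].
  - rewrite (H t (or_introl eq_refl) P). lra.
  - assert (0 <= tval u t * tval u t) by nra. nra.
Qed.

Lemma wsum_nonneg (l : list term) (u : Quad) :
  (forall t, In t l -> t_lam t < 0 -> tval u t = 0) -> 0 <= wsum l u u.
Proof.
  induction l as [|t l IH]; intros H; simpl; [lra|].
  assert (IH' := IH (fun v Hv => H v (or_intror Hv))).
  destruct (Rlt_dec (t_lam t) 0) as [P|P].
  - rewrite (H t (or_introl eq_refl) P). lra.
  - assert (0 <= tval u t * tval u t) by nra. nra.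
Qed.

Lemma wsum_pos (l : list term) (u : Quad) :
  (forall t, In t l -> t_lam t < 0 -> tval u t = 0) ->
  (exists t, In t l /\ 0 < t_lam t /\ tval u t <> 0) -> 0 < wsum l u u.
Proof.
  induction l as [|t l IH]; intros H [y [Hy [Hp Hn]]]; simpl; [destruct Hy|].
  assert (Hl : 0 <= wsum l u u) by (apply wsum_nonneg; intros v Hv; apply H; simpl; auto).
  destruct Hy as [<-|Hy].
  - assert (0 < tval u t * tval u t).
    { assert (tval u t * tval u t <> 0) by (apply Rmult_integral_contrapositive; tauto). nra. }
    nra.
  - assert (0 < wsum l u u) by (apply IH; [intros v Hv; apply H; simpl; auto|exists y; auto]).
    destruct (Rlt_dec (t_lam t) 0) as [P|P].
    + rewrite (H t (or_introl eq_refl) P). lra.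
    + assert (0 <= tval u t * tval u t) by nra. nra.
Qed.

(** * Representations with at most three terms have the least badge *)

(* the quadratic form  (a1 b - b1 a) (a2 b - b2 a)  vanishing at (a1,b1) and (a2,b2) *)
Definition qprod (a1 b1 a2 b2 : R) : Quad := mkQuad (b1 * b2) (- (a1 * b2 + a2 * b1)) (a1 * a2).

Lemma qval_qprod (a1 b1 a2 b2 a b : R) :
  qval (qprod a1 b1 a2 b2) a b = dd a1 b1 a b * dd a2 b2 a b.
Proof. unfold qval, qprod, dd; simpl; ring. Qed.

Definition separated (z y : term) : Prop := zero_form z \/ tdet z y <> 0.

Lemma separating_root (z y : term) : ~ zero_form y -> separated z y ->
  exists p q, dd p q (t_alpha z) (t_beta z) = 0 /\ dd p q (t_alpha y) (t_beta y) <> 0.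
Proof.
  intros Hy [[A B]|D].
  - exists (- t_beta y), (t_alpha y). unfold dd. rewrite A, B. split; [ring|].
    intro E. apply Hy. split; nra.
  - exists (t_alpha z), (t_beta z). split; [unfold dd; ring|exact D].
Qed.

Lemma separating_quadratic (Z : list term) (y : term) :
  (length Z <= 2)%nat -> ~ zero_form y -> (forall z, In z Z -> separated z y) ->
  exists u, (forall z, In z Z -> tval u z = 0) /\ tval u y <> 0.
Proof.
  intros HL Hy HZ.
  assert (Two : forall z1 z2, separated z1 y -> separated z2 y ->
            exists u, tval u z1 = 0 /\ tval u z2 = 0 /\ tval u y <> 0).
  { intros z1 z2 S1 S2.
    destruct (separating_root z1 y Hy S1) as [p1 [q1 [Z1 N1]]].
    destruct (separating_root z2 y Hy S2) as [p2 [q2 [Z2 N2]]].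
    exists (qprod p1 q1 p2 q2). unfold tval. rewrite !qval_qprod, Z1, Z2.
    split; [ring|split; [ring|apply Rmult_integral_contrapositive; tauto]]. }
  set (o := (0, 0, 0) : term).
  assert (So : separated o y) by (left; split; reflexivity).
  destruct Z as [|z1 [|z2 [|z3 Z]]]; simpl in HL; try lia.
  - destruct (Two o o So So) as [u [_ [_ N]]]. exists u. split; [intros z []|auto].
  - destruct (Two z1 o (HZ z1 (or_introl eq_refl)) So) as [u [U1 [_ N]]].
    exists u. split; [intros z [<-|[]]; auto|auto].
  - destruct (Two z1 z2 (HZ z1 (or_introl eq_refl)) (HZ z2 (or_intror (or_introl eq_refl))))
      as [u [U1 [U2 N]]].
    exists u. split; [intros z [<-|[<-|[]]]; auto|auto].
Qed.

Lemma at_most_one_proportional (z : term) (Y : list term) : pairwise_indep Y -> ~ zero_form z ->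
  (length Y <= S (length (filter (fun y => negb (proportional z y)) Y)))%nat.
Proof.
  induction Y as [|y Y IH]; simpl; [lia|]. intros [H1 H2] Hz.
  unfold proportional at 1. destruct (Req_EM_T (tdet z y) 0) as [E|E]; simpl.
  - assert (Hall : filter (fun y => negb (proportional z y)) Y = Y).
    { apply forallb_filter_id, forallb_forall. intros y' Hy'. unfold proportional.
      destruct (Req_EM_T (tdet z y') 0) as [E'|E']; auto.
      exfalso. apply (H1 y' Hy'). eapply proportional_trans; eauto. }
    rewrite Hall. lia.
  - specialize (IH H2 Hz). lia.
Qed.

(* pigeonhole: an honest list longer than Z has a member separated from all of Z *)
Lemma avoid_proportional (Z Y : list term) : pairwise_indep Y -> (length Z < length Y)%nat ->
  exists y, In y Y /\ forall z, In z Z -> separated z y.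
Proof.
  revert Y. induction Z as [|z Z IH]; intros Y HY HL.
  - destruct Y as [|y Y]; simpl in HL; [lia|]. exists y. split; simpl; auto. intros z [].
  - simpl in HL. destruct (classic (zero_form z)) as [Hz|Hz].
    + destruct (IH Y HY) as [y [Hy Hy2]]; [lia|]. exists y. split; auto.
      intros z' [<-|Hz']; [left; auto|auto].
    + pose proof (at_most_one_proportional z Y HY Hz).
      destruct (IH (filter (fun y => negb (proportional z y)) Y)) as [y [Hy Hy2]].
      * apply pairwise_indep_filter; auto.
      * lia.
      * apply filter_In in Hy. destruct Hy as [Hy Hy3]. exists y. split; auto.
        intros z' [<-|Hz']; auto. right. unfold proportional in Hy3.
        destruct (Req_EM_T (tdet z y) 0); [discriminate|auto].
Qed.

Definition small_rep (h : Quartic) (l : list term) : Prop :=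
  clean l /\ pairwise_indep l /\ (length l <= 3)%nat /\ qsum l = h.

(* Lower bound: if R had fewer positive terms than a small representation R0, a quadratic
   form vanishing on the positive terms of R and the negative terms of R0, but not on some
   positive term of R0, would make the catalecticant both positive and nonpositive. *)
Lemma small_rep_min_pos (h : Quartic) (R0 R : list term) :
  small_rep h R0 -> represents h R -> (cntpos R0 <= cntpos R)%nat.
Proof.
  intros [C0 [H0 [L0 S0]]] [NR SR].
  destruct (le_lt_dec (cntpos R0) (cntpos R)) as [ok|lt]; auto. exfalso.
  unfold cntpos in lt.
  destruct (avoid_proportional (filter posf R) (filter posf R0)) as [y [Hy Hsep]];
    auto using pairwise_indep_filter.
  apply In_filter_pos in Hy. destruct Hy as [Hy Hyp].
  assert (LS := count_split R0 (fun t Ht => proj1 (C0 t Ht))). unfold cntpos, cntneg in LS.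
  destruct (separating_quadratic (filter posf R ++ filter negf R0) y) as [u [Hu Huy]].
  - rewrite length_app. lia.
  - apply C0; auto.
  - intros z Hz. apply in_app_or in Hz. destruct Hz as [Hz|Hz]; auto.
    right. apply In_filter_neg in Hz. destruct Hz as [Hz Hzn].
    apply (pairwise_indep_In R0); auto. intros ->. lra.
  - assert (E : wsum R0 u u = wsum R u u) by (rewrite <- !cat_qsum, S0, SR; reflexivity).
    assert (wsum R u u <= 0).
    { apply wsum_nonpos. intros t Ht Hp. apply Hu, in_or_app. left. apply In_filter_pos; auto. }
    assert (0 < wsum R0 u u).
    { apply wsum_pos; [|exists y; auto].
      intros t Ht Hn. apply Hu, in_or_app. right. apply In_filter_neg; auto. }
    lra.
Qed.

Lemma small_rep_negL (h : Quartic) (l : list term) :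
  small_rep h l -> small_rep (qscale (-1) h) (negL l).
Proof.
  intros [C [H [L S]]].
  split; [apply clean_negL; auto|split; [apply pairwise_indep_negL; auto|split]].
  - unfold negL; rewrite length_map; auto.
  - rewrite qsum_negL, S; reflexivity.
Qed.

Lemma small_rep_min_neg (h : Quartic) (R0 R : list term) :
  small_rep h R0 -> represents h R -> (cntneg R0 <= cntneg R)%nat.
Proof.
  intros S Rp. rewrite <- !cntpos_negL.
  eapply small_rep_min_pos; [apply small_rep_negL; eauto|apply represents_negL; eauto].
Qed.

(** * Positive sums of fourth powers: the adjugate of the catalecticant *)

(* entries of the adjugate of the catalecticant matrix, and its determinant *)
Definition A00 (h : Quartic) : R := m2 h * m4 h - m3 h ^ 2.
Definition A01 (h : Quartic) : R := m2 h * m3 h - m1 h * m4 h.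
Definition A02 (h : Quartic) : R := m1 h * m3 h - m2 h ^ 2.
Definition A11 (h : Quartic) : R := m0 h * m4 h - m2 h ^ 2.
Definition A12 (h : Quartic) : R := m1 h * m2 h - m0 h * m3 h.
Definition A22 (h : Quartic) : R := m0 h * m2 h - m1 h ^ 2.
Definition detC (h : Quartic) : R := m0 h * A00 h + m1 h * A01 h + m2 h * A02 h.

(* the adjugate applied to the point evaluation at (a,b): cat h u (adjq h a b) = detC h u(a,b) *)
Definition adjq (h : Quartic) (a b : R) : Quad :=
  mkQuad (A00 h * a^2 + A01 h * (a*b) + A02 h * b^2)
         (A01 h * a^2 + A11 h * (a*b) + A12 h * b^2)
         (A02 h * a^2 + A12 h * (a*b) + A22 h * b^2).

Definition kap (h : Quartic) (a b : R) : R := qval (adjq h a b) a b.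

Definition bet (h : Quartic) (p q a b : R) : R := kap (qadd (pow4 p q) h) a b - kap h a b.

Lemma cat_adjq (h : Quartic) (u : Quad) (a b : R) :
  cat h u (adjq h a b) = detC h * qval u a b.
Proof. unfold cat, adjq, detC, qval, A00, A01, A02, A11, A12, A22; simpl; ring. Qed.

(* rank-one update formulas (matrix determinant lemma and its analogues) *)
Lemma detC_update (h : Quartic) (mu p q : R) :
  detC (qadd (qscale mu (pow4 p q)) h) = detC h + mu * kap h p q.
Proof.
  unfold kap, qval, adjq, detC, A00, A01, A02, A11, A12, A22, qadd, qscale, pow4; simpl; ring.
Qed.

Lemma kap_update (h : Quartic) (mu p q a b : R) :
  kap (qadd (qscale mu (pow4 p q)) h) a b = kap h a b + mu * bet h p q a b.
Proof.
  unfold bet, kap, qval, adjq, A00, A01, A02, A11, A12, A22, qadd, qscale, pow4; simpl; ring.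
Qed.

Lemma bet_update (h : Quartic) (mu p' q' p q a b : R) :
  bet (qadd (qscale mu (pow4 p' q')) h) p q a b
  = bet h p q a b + mu * (dd a b p' q' * dd a b p q * dd p' q' p q) ^ 2.
Proof.
  unfold dd, bet, kap, qval, adjq, A00, A01, A02, A11, A12, A22, qadd, qscale, pow4; simpl; ring.
Qed.

Definition allpos (l : list term) : Prop := forall t, In t l -> 0 < t_lam t.

Lemma allpos_tail (t : term) (l : list term) : allpos (t :: l) -> allpos l.
Proof. intros H u Hu; apply H; simpl; auto. Qed.

Lemma qsum_cons (t : term) (l : list term) :
  qsum (t :: l) = qadd (qscale (t_lam t) (pow4 (t_alpha t) (t_beta t))) (qsum l).
Proof. reflexivity. Qed.

Lemma bet_nonneg (l : list term) (p q a b : R) : allpos l -> 0 <= bet (qsum l) p q a b.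
Proof.
  induction l as [|t l IH]; intros H.
  - unfold bet, kap, qval, adjq, A00, A01, A02, A11, A12, A22, qadd, pow4; simpl. nra.
  - rewrite qsum_cons, bet_update.
    assert (0 <= bet (qsum l) p q a b) by (apply IH; eapply allpos_tail; eauto).
    assert (0 < t_lam t) by (apply H; simpl; auto).
    assert (0 <= (dd a b (t_alpha t) (t_beta t) * dd a b p q * dd (t_alpha t) (t_beta t) p q) ^ 2)
      by apply pow2_ge_0.
    nra.
Qed.

Lemma kap_nonneg (l : list term) (a b : R) : allpos l -> 0 <= kap (qsum l) a b.
Proof.
  induction l as [|t l IH]; intros H.
  - unfold kap, qval, adjq, A00, A01, A02, A11, A12, A22; simpl. lra.
  - rewrite qsum_cons, kap_update.
    assert (0 <= kap (qsum l) a b) by (apply IH; eapply allpos_tail; eauto).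
    assert (0 <= bet (qsum l) (t_alpha t) (t_beta t) a b)
      by (apply bet_nonneg; eapply allpos_tail; eauto).
    assert (0 < t_lam t) by (apply H; simpl; auto).
    nra.
Qed.

Lemma detC_nonneg (l : list term) : allpos l -> 0 <= detC (qsum l).
Proof.
  induction l as [|t l IH]; intros H.
  - unfold detC, A00, A01, A02; simpl. lra.
  - rewrite qsum_cons, detC_update.
    assert (0 <= detC (qsum l)) by (apply IH; eapply allpos_tail; eauto).
    assert (0 <= kap (qsum l) (t_alpha t) (t_beta t))
      by (apply kap_nonneg; eapply allpos_tail; eauto).
    assert (0 < t_lam t) by (apply H; simpl; auto).
    nra.
Qed.

Lemma sq_pos (x : R) : x <> 0 -> 0 < x ^ 2.
Proof. intros H. simpl. rewrite Rmult_1_r. apply Rsqr_pos_lt; auto. Qed.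

Lemma kap_pos (t1 t2 : term) (l : list term) (a b : R) : allpos (t1 :: t2 :: l) ->
  dd a b (t_alpha t1) (t_beta t1) <> 0 -> dd a b (t_alpha t2) (t_beta t2) <> 0 ->
  tdet t2 t1 <> 0 -> 0 < kap (qsum (t1 :: t2 :: l)) a b.
Proof.
  intros H D1 D2 D12.
  rewrite qsum_cons, kap_update.
  assert (0 < t_lam t1) by (apply H; simpl; auto).
  assert (0 < t_lam t2) by (apply H; simpl; auto).
  assert (0 <= kap (qsum (t2 :: l)) a b) by (apply kap_nonneg; eapply allpos_tail; eauto).
  set (V := dd a b (t_alpha t2) (t_beta t2) * dd a b (t_alpha t1) (t_beta t1) * tdet t2 t1).
  assert (HB : bet (qsum (t2 :: l)) (t_alpha t1) (t_beta t1) a b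
               = bet (qsum l) (t_alpha t1) (t_beta t1) a b + t_lam t2 * V ^ 2)
    by (rewrite qsum_cons, bet_update; reflexivity).
  assert (0 <= bet (qsum l) (t_alpha t1) (t_beta t1) a b)
    by (apply bet_nonneg; do 2 eapply allpos_tail; eauto).
  assert (0 < V ^ 2).
  { apply sq_pos. unfold V. repeat apply Rmult_integral_contrapositive; split; auto. }
  rewrite HB.
  assert (0 < t_lam t1 * (t_lam t2 * V ^ 2))
    by (apply Rmult_lt_0_compat; [|apply Rmult_lt_0_compat]; lra).
  nra.
Qed.

Lemma detC_pos (t1 t2 t3 : term) (l : list term) : allpos (t1 :: t2 :: t3 :: l) ->
  tdet t1 t2 <> 0 -> tdet t1 t3 <> 0 -> tdet t3 t2 <> 0 -> 0 < detC (qsum (t1 :: t2 :: t3 :: l)).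
Proof.
  intros H D12 D13 D32.
  rewrite qsum_cons, detC_update.
  assert (0 <= detC (qsum (t2 :: t3 :: l))) by (apply detC_nonneg; eapply allpos_tail; eauto).
  assert (0 < kap (qsum (t2 :: t3 :: l)) (t_alpha t1) (t_beta t1))
    by (apply kap_pos; auto; eapply allpos_tail; eauto).
  assert (0 < t_lam t1) by (apply H; simpl; auto).
  nra.
Qed.

Lemma cat_sym (h : Quartic) (u w : Quad) : cat h u w = cat h w u.
Proof. unfold cat; ring. Qed.

(* cat h u w only depends on the product u w *)
Lemma cat_product (h : Quartic) (a1 b1 a2 b2 : R) :
  cat h (qprod a1 b1 a1 b1) (qprod a2 b2 a2 b2) = cat h (qprod a1 b1 a2 b2) (qprod a1 b1 a2 b2).
Proof. unfold cat, qprod; simpl; ring. Qed.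

(* Below, l1 and l2 are the linear forms vanishing at (a1,b1) and (a2,b2), so that
   qprod a1 b1 a2 b2 = l1 l2, and d = dd a1 b1 a2 b2 <> 0 makes l1^2, l1 l2, l2^2 a basis
   of the quadratic forms.  mid u is the coefficient of l1 l2 in d^2 u in this basis. *)
Definition mid (a1 b1 a2 b2 : R) (u : Quad) : R :=
  - (2 * v0 u * a1 * a2 + v1 u * (a1 * b2 + a2 * b1) + 2 * v2 u * b1 * b2).

(* d^2 u = u(a2,b2) l1^2 + mid u l1 l2 + u(a1,b1) l2^2, expanded bilinearly in cat *)
Lemma cat_change_of_basis (h : Quartic) (a1 b1 a2 b2 : R) (u w : Quad) :
  let e11 := qprod a1 b1 a1 b1 in
  let e12 := qprod a1 b1 a2 b2 in
  let e22 := qprod a2 b2 a2 b2 in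
  let mu := mid a1 b1 a2 b2 u in
  let mw := mid a1 b1 a2 b2 w in
  dd a1 b1 a2 b2 ^ 4 * cat h u w =
    qval u a2 b2 * qval w a2 b2 * cat h e11 e11
  + qval u a2 b2 * mw * cat h e11 e12 + qval u a2 b2 * qval w a1 b1 * cat h e11 e22
  + mu * qval w a2 b2 * cat h e12 e11 + mu * mw * cat h e12 e12
  + mu * qval w a1 b1 * cat h e12 e22
  + qval u a1 b1 * qval w a2 b2 * cat h e22 e11 + qval u a1 b1 * mw * cat h e22 e12
  + qval u a1 b1 * qval w a1 b1 * cat h e22 e22.
Proof. intros. unfold e11, e12, e22, mu, mw, mid, cat, qprod, qval, dd; simpl; ring. Qed.

(* by the change of basis, cat r vanishes identically once cat r (l1 l2) _ = 0,
   cat r l1^2 l1^2 = 0 and cat r l2^2 l2^2 = 0 (note cat r l1^2 l2^2 = cat r (l1 l2) (l1 l2)) *)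
Lemma cat_vanishes_of_basis (r : Quartic) (a1 b1 a2 b2 : R) :
  dd a1 b1 a2 b2 <> 0 ->
  (forall w, cat r (qprod a1 b1 a2 b2) w = 0) ->
  cat r (qprod a1 b1 a1 b1) (qprod a1 b1 a1 b1) = 0 ->
  cat r (qprod a2 b2 a2 b2) (qprod a2 b2 a2 b2) = 0 ->
  forall u w, cat r u w = 0.
Proof.
  intros Hd H12 H11 H22 u w.
  apply (Rmult_eq_reg_l (dd a1 b1 a2 b2 ^ 4)); [|apply pow_nonzero; auto].
  rewrite cat_change_of_basis. cbv zeta.
  rewrite (cat_sym r (qprod a1 b1 a1 b1) (qprod a1 b1 a2 b2)),
          (cat_sym r (qprod a2 b2 a2 b2) (qprod a1 b1 a2 b2)),
          (cat_sym r (qprod a2 b2 a2 b2) (qprod a1 b1 a1 b1)),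
          (cat_product r a1 b1 a2 b2), !H12, H11, H22.
  ring.
Qed.

Lemma quartic_of_cat_zero (r : Quartic) : (forall u w, cat r u w = 0) -> r = qzero.
Proof.
  intros H. set (X := mkQuad 1 0 0). set (Y := mkQuad 0 1 0). set (Z := mkQuad 0 0 1).
  pose proof (H X X). pose proof (H X Y). pose proof (H Y Y). pose proof (H Y Z).
  pose proof (H Z Z). unfold cat in *; simpl in *.
  apply Quartic_ext; simpl; lra.
Qed.

Lemma two_powers (q : Quartic) (a1 b1 a2 b2 : R) : dd a1 b1 a2 b2 <> 0 ->
  (forall u, cat q u (qprod a1 b1 a2 b2) = 0) ->
  exists c1 c2, q = qadd (qscale c1 (pow4 a1 b1)) (qscale c2 (pow4 a2 b2)).
Proof.
  intros Hd Hq.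
  set (d := dd a1 b1 a2 b2) in *.
  assert (Hd4 : d ^ 4 <> 0) by (apply pow_nonzero; auto).
  set (c1 := cat q (qprod a2 b2 a2 b2) (qprod a2 b2 a2 b2) / d ^ 4).
  set (c2 := cat q (qprod a1 b1 a1 b1) (qprod a1 b1 a1 b1) / d ^ 4).
  exists c1, c2.
  set (r := qadd q (qadd (qscale (- c1) (pow4 a1 b1)) (qscale (- c2) (pow4 a2 b2)))).
  assert (Hr : forall u w, cat r u w = cat q u w
                 - c1 * (qval u a1 b1 * qval w a1 b1) - c2 * (qval u a2 b2 * qval w a2 b2)).
  { intros u w. unfold r. rewrite !cat_add, !cat_scale, !cat_pow4. ring. }
  assert (Z : r = qzero).
  { apply quartic_of_cat_zero, (cat_vanishes_of_basis r a1 b1 a2 b2 Hd).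
    - intros w. rewrite Hr, cat_sym, Hq, !qval_qprod. unfold dd; ring.
    - rewrite Hr, !qval_qprod. unfold c2. fold d.
      replace (dd a1 b1 a1 b1) with 0 by (unfold dd; ring). field; auto.
    - rewrite Hr, !qval_qprod. unfold c1.
      replace (dd a2 b2 a2 b2) with 0 by (unfold dd; ring).
      replace (dd a2 b2 a1 b1) with (- d) by (unfold d, dd; ring). field; auto. }
  apply Quartic_ext; assert (E := f_equal m0 Z); assert (E1 := f_equal m1 Z);
    assert (E2 := f_equal m2 Z); assert (E3 := f_equal m3 Z); assert (E4 := f_equal m4 Z);
    unfold r in *; simpl in *; lra.
Qed.

Lemma Quad_ext (u w : Quad) : v0 u = v0 w -> v1 u = v1 w -> v2 u = v2 w -> u = w.
Proof. destruct u, w; simpl; intros; subst; reflexivity. Qed.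

Definition qdscale (k : R) (u : Quad) : Quad := mkQuad (k * v0 u) (k * v1 u) (k * v2 u).

Lemma cat_qdscale (h : Quartic) (u w : Quad) (k : R) : cat h u (qdscale k w) = k * cat h u w.
Proof. unfold cat, qdscale; simpl; ring. Qed.

Definition discr (g : Quad) : R := v1 g ^ 2 - 4 * v0 g * v2 g.

Lemma qval_nonneg_of_discr (g : Quad) (ma mb : R) :
  0 < qval g ma mb -> discr g <= 0 -> forall a b, 0 <= qval g a b.
Proof.
  intros Hm Hd a b. unfold qval, discr in *.
  assert (Sq : forall x y, 4 * v0 g * (v0 g * x^2 + v1 g * x * y + v2 g * y^2)
                 = (2 * v0 g * x + v1 g * y)^2 + (4 * v0 g * v2 g - v1 g ^ 2) * y^2)
    by (intros; ring).
  assert (Nn : forall x y, 0 <= (2 * v0 g * x + v1 g * y)^2 + (4 * v0 g * v2 g - v1 g ^ 2) * y^2).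
  { intros x y. assert (0 <= (2 * v0 g * x + v1 g * y)^2) by apply pow2_ge_0.
    assert (0 <= (4 * v0 g * v2 g - v1 g ^ 2) * y^2) by (apply Rmult_le_pos; [lra|apply pow2_ge_0]).
    lra. }
  destruct (Rtotal_order (v0 g) 0) as [N|[Z|P]].
  - exfalso. specialize (Sq ma mb). specialize (Nn ma mb). nra.
  - rewrite Z in *. assert (V1 : v1 g = 0) by nra. rewrite V1 in *.
    assert (0 < v2 g) by (assert (0 <= mb^2) by apply pow2_ge_0; nra).
    assert (0 <= b^2) by apply pow2_ge_0. nra.
  - specialize (Sq a b). specialize (Nn a b). nra.
Qed.

Lemma factor_of_discr (g : Quad) : 0 < discr g ->
  exists k a1 b1 a2 b2, k <> 0 /\ dd a1 b1 a2 b2 <> 0 /\ g = qdscale k (qprod a1 b1 a2 b2).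
Proof.
  intros Hd. unfold discr in Hd.
  destruct (Req_dec (v0 g) 0) as [Z|Z].
  - assert (V1 : v1 g <> 0) by (intro E; rewrite Z, E in Hd; lra).
    exists 1, 1, 0, (v2 g), (- v1 g). split; [lra|split].
    + unfold dd. intro E. apply V1. lra.
    + apply Quad_ext; unfold qdscale, qprod; simpl; rewrite ?Z; ring.
  - set (s := sqrt (v1 g ^ 2 - 4 * v0 g * v2 g)).
    assert (Hs : s * s = v1 g ^ 2 - 4 * v0 g * v2 g) by (apply sqrt_sqrt; lra).
    assert (Hs0 : 0 < s) by (apply sqrt_lt_R0; lra).
    exists (v0 g), ((- v1 g + s) / (2 * v0 g)), 1, ((- v1 g - s) / (2 * v0 g)), 1.
    split; [auto|split].
    + unfold dd. replace ((- v1 g + s) / (2 * v0 g) * 1 - (- v1 g - s) / (2 * v0 g) * 1)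
        with (s / v0 g) by (field; auto).
      unfold Rdiv. apply Rmult_integral_contrapositive; split; [lra|apply Rinv_neq_0_compat; auto].
    + apply Quad_ext; unfold qdscale, qprod; simpl; [ring|field; auto|].
      replace (v0 g * ((- v1 g + s) / (2 * v0 g) * ((- v1 g - s) / (2 * v0 g))))
        with ((v1 g * v1 g - s * s) / (4 * v0 g)) by (field; auto).
      rewrite Hs. field; auto.
Qed.

(** * Trading a positive sum of fourth powers for two fourth powers *)

Lemma wsum_pairing_zero (l : list term) (psi g : Quad) : allpos l ->
  (forall t, In t l -> 0 <= tval g t) -> (forall t, In t l -> 0 < tval psi t) ->
  0 <= wsum l psi g /\ (wsum l psi g = 0 -> wsum l g g = 0).
Proof.
  induction l as [|t l IH]; intros Hl Hg Hpsi; simpl; [lra|].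
  destruct IH as [A B]; [eapply allpos_tail; eauto|intros; apply Hg; simpl; auto
                        |intros; apply Hpsi; simpl; auto|].
  assert (L : 0 < t_lam t) by (apply Hl; simpl; auto).
  assert (G : 0 <= tval g t) by (apply Hg; simpl; auto).
  assert (P : 0 < tval psi t) by (apply Hpsi; simpl; auto).
  assert (T : 0 <= t_lam t * tval psi t * tval g t)
    by (apply Rmult_le_pos; [apply Rmult_le_pos|]; lra).
  split; [lra|]. intros E.
  assert (Z : tval g t = 0).
  { assert (E1 : t_lam t * tval psi t * tval g t = 0) by lra.
    apply Rmult_integral in E1. destruct E1 as [E1|E1]; auto.
    apply Rmult_integral in E1. lra. }
  rewrite Z, (B ltac:(lra)). ring.
Qed.

(* The adjugate form g of a positive representation with nonsingular catalecticant, taken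
   at a point M independent of all its terms, has two distinct real roots: otherwise g
   would be semidefinite, and pairing it with the square psi of the line through M would
   force g to vanish on every term, contradicting cat n g g = detC n * g(M) > 0. *)
Lemma adjq_discr_pos (P : list term) (ma mb : R) : allpos P ->
  (forall t, In t P -> dd ma mb (t_alpha t) (t_beta t) <> 0) ->
  0 < detC (qsum P) -> 0 < kap (qsum P) ma mb -> 0 < discr (adjq (qsum P) ma mb).
Proof.
  intros HP HM HD HK.
  set (g := adjq (qsum P) ma mb).
  destruct (Rlt_le_dec 0 (discr g)) as [ok|Hd]; auto. exfalso.
  assert (Hg : forall a b, 0 <= qval g a b) by (apply (qval_nonneg_of_discr g ma mb); auto).
  set (psi := qprod ma mb ma mb).
  destruct (wsum_pairing_zero P psi g HP) as [_ Z].
  - intros t _. apply Hg.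
  - intros t Ht. unfold tval, psi. rewrite qval_qprod.
    assert (Q := HM t Ht). nra.
  - assert (E1 : wsum P psi g = 0).
    { rewrite <- cat_qsum. unfold g. rewrite cat_adjq. unfold psi. rewrite qval_qprod.
      unfold dd; ring. }
    assert (E2 : wsum P g g = detC (qsum P) * kap (qsum P) ma mb)
      by (rewrite <- cat_qsum; unfold g at 2; rewrite cat_adjq; reflexivity).
    assert (0 < detC (qsum P) * kap (qsum P) ma mb) by (apply Rmult_lt_0_compat; auto).
    specialize (Z E1). lra.
Qed.

(* Writing n for the positive quartic
   -(negative part), D = detC n and K = kap n M, the quartic q = (D/K) M^4 - n has the
   adjugate form g of n at M in the kernel of its catalecticant; g has two real roots,
   so q is a combination of their fourth powers. *)
Lemma three_powers (M : term) (N : list term) (l0 : R) :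
  pairwise_indep N -> (forall t, In t N -> t_lam t < 0) -> (3 <= length N)%nat ->
  (forall t, In t N -> tdet M t <> 0) ->
  exists l, (length l <= 3)%nat /\ qsum l = qadd (qscale l0 (term_pow4 M)) (qsum N).
Proof.
  intros HN Hneg HL HM.
  set (ma := t_alpha M). set (mb := t_beta M).
  set (P := negL N). set (n := qsum P).
  assert (HP : allpos P).
  { intros t Ht. apply in_map_iff in Ht. destruct Ht as [v [<- Hv]].
    specialize (Hneg v Hv). unfold tneg, t_lam in *; simpl; lra. }
  assert (HPM : forall t, In t P -> dd ma mb (t_alpha t) (t_beta t) <> 0).
  { intros t Ht. apply in_map_iff in Ht. destruct Ht as [v [<- Hv]]. apply (HM v Hv). }
  assert (HD : 0 < detC n).
  { destruct N as [|t1 [|t2 [|t3 r]]]; simpl in HL; try lia.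
    destruct HN as [H1 [H2 _]].
    apply detC_pos; auto.
    - exact (H1 t2 (or_introl eq_refl)).
    - exact (H1 t3 (or_intror (or_introl eq_refl))).
    - change (tdet t3 t2 <> 0). rewrite tdet_anti. intro E.
      apply (H2 t3 (or_introl eq_refl)). lra. }
  assert (HK : 0 < kap n ma mb).
  { destruct N as [|t1 [|t2 [|t3 r]]]; simpl in HL; try lia.
    destruct HN as [H1 _].
    apply kap_pos; auto.
    - apply HPM; simpl; auto.
    - apply HPM; simpl; auto.
    - change (tdet t2 t1 <> 0). rewrite tdet_anti. intro E.
      apply (H1 t2 (or_introl eq_refl)). lra. }
  set (g := adjq n ma mb).
  set (s := detC n / kap n ma mb).
  set (q := qadd (qscale s (term_pow4 M)) (qscale (-1) n)).
  assert (Kernel : forall u, cat q u g = 0).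
  { intros u. unfold q. rewrite cat_add, !cat_scale. unfold term_pow4. rewrite cat_pow4.
    unfold g. rewrite cat_adjq. fold ma mb. fold (kap n ma mb). unfold s. field. lra. }
  destruct (factor_of_discr g (adjq_discr_pos P ma mb HP HPM HD HK))
    as [k [a1 [b1 [a2 [b2 [Hk [Hd Hg]]]]]]].
  destruct (two_powers q a1 b1 a2 b2 Hd) as [c1 [c2 Hq]].
  { intros u. apply (Rmult_eq_reg_l k); auto. rewrite <- cat_qdscale, <- Hg, Kernel. ring. }
  exists [(l0 - s, ma, mb); (c1, a1, b1); (c2, a2, b2)]. split; [simpl; lia|].
  assert (Hn : qsum N = qscale (-1) n)
    by (unfold n, P; rewrite qsum_negL, qscale_opp_involutive; auto).
  assert (Split : qadd (qscale l0 (term_pow4 M)) (qsum N) = qadd (qscale (l0 - s) (term_pow4 M)) q)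
    by (rewrite Hn; unfold q; apply Quartic_ext; simpl; ring).
  rewrite Split, Hq.
  unfold ma, mb. apply Quartic_ext; simpl; unfold t_lam, t_alpha, t_beta; simpl; ring.
Qed.

(** * Every quartic has a small representation or one with badge (2,2) *)

Definition classified (h : Quartic) : Prop :=
  (exists l, small_rep h l) \/
  (exists l, represents h l /\ pairwise_indep l /\ cntpos l = 2%nat /\ cntneg l = 2%nat).

Lemma small_of_three (l : list term) : (length l <= 3)%nat -> exists l', small_rep (qsum l) l'.
Proof.
  intros Hl. destruct (make_honest l) as [l' [C [H [L S]]]].
  exists l'. split; [auto|split; [auto|split; [lia|auto]]].
Qed.

Lemma pos_neg_independent (l : list term) (tp t : term) : pairwise_indep l ->
  In tp (filter posf l) -> In t (filter negf l) -> tdet tp t <> 0.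
Proof.
  intros H Hp Hn. apply In_filter_pos in Hp. apply In_filter_neg in Hn.
  apply (pairwise_indep_In l); try tauto. intros ->. lra.
Qed.

Lemma negatives_negative (l : list term) : forall t, In t (filter negf l) -> t_lam t < 0.
Proof. intros t Ht. apply In_filter_neg in Ht. tauto. Qed.

Lemma few_pos_small (h : Quartic) (l : list term) :
  represents h l -> pairwise_indep l -> (cntpos l <= 1)%nat -> exists l', small_rep h l'.
Proof.
  intros [Hl Hs] H Cp.
  destruct (le_lt_dec (length l) 3) as [Le|Gt]; [rewrite <- Hs; apply small_of_three; auto|].
  assert (LS := count_split l Hl). unfold cntpos, cntneg in *.
  assert (Split := qsum_sign_split l). rewrite Hs in Split.
  assert (HN : pairwise_indep (filter negf l)) by (apply pairwise_indep_filter; auto).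
  assert (Three : exists l', (length l' <= 3)%nat /\ qsum l' = h).
  { destruct (filter posf l) as [|tp [|tq P]] eqn:EP; simpl in Cp; try lia.
    - destruct (filter negf l) as [|t1 N] eqn:EN; simpl in LS; [lia|].
      destruct HN as [H1 H2].
      destruct (three_powers t1 N (t_lam t1) H2) as [l' [L' S']]; auto.
      + intros t Ht. apply (negatives_negative l). rewrite EN; simpl; auto.
      + lia.
      + exists l'. split; auto. rewrite S', Split. apply Quartic_ext; simpl; ring.
    - destruct (three_powers tp (filter negf l) (t_lam tp) HN) as [l' [L' S']].
      + apply negatives_negative.
      + simpl in LS; lia.
      + intros t Ht. apply (pos_neg_independent l); auto. rewrite EP; simpl; auto.
      + exists l'. split; auto. rewrite S', Split. apply Quartic_ext; simpl; ring. }
  destruct Three as [l' [L' <-]]. apply small_of_three; auto.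
Qed.

Lemma small_rep_opp (h : Quartic) :
  (exists l, small_rep (qscale (-1) h) l) -> exists l, small_rep h l.
Proof.
  intros [l S]. exists (negL l). rewrite <- (qscale_opp_involutive h). apply small_rep_negL; auto.
Qed.

Lemma few_neg_small (h : Quartic) (l : list term) :
  represents h l -> pairwise_indep l -> (cntneg l <= 1)%nat -> exists l', small_rep h l'.
Proof.
  intros Hr H Cn. apply small_rep_opp, (few_pos_small _ (negL l)).
  - apply represents_negL; auto.
  - apply pairwise_indep_negL; auto.
  - rewrite cntpos_negL; auto.
Qed.

Lemma classified_of_honest4 (h : Quartic) (l : list term) :
  represents h l -> pairwise_indep l -> (length l <= 4)%nat -> classified h.
Proof.
  intros Hr H Len.
  destruct (le_lt_dec (cntpos l) 1); [left; apply (few_pos_small h l); auto|].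
  destruct (le_lt_dec (cntneg l) 1); [left; apply (few_neg_small h l); auto|].
  assert (LS := count_split l (proj1 Hr)).
  right. exists l. repeat split; try apply Hr; auto; lia.
Qed.

Lemma classified_of_sum4 (l : list term) : (length l <= 4)%nat -> classified (qsum l).
Proof.
  intros Len. destruct (make_honest l) as [l' [C [H [L S]]]].
  apply (classified_of_honest4 _ l'); [split; [intros t Ht; apply C; auto|auto]|auto|lia].
Qed.

(* badge (2,3): the second positive term and the negatives collapse to three terms *)
Lemma two_three_classified (h : Quartic) (l : list term) :
  represents h l -> pairwise_indep l -> cntpos l = 2%nat -> cntneg l = 3%nat -> classified h.
Proof.
  intros [Hl Hs] H Cp Cn.
  assert (Split := qsum_sign_split l). rewrite Hs in Split.
  unfold cntpos, cntneg in *.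
  destruct (filter posf l) as [|t1 [|t2 [|t3 P]]] eqn:EP; simpl in Cp; try lia.
  destruct (three_powers t2 (filter negf l) (t_lam t2)) as [l' [L' S']].
  - apply pairwise_indep_filter; auto.
  - apply negatives_negative.
  - lia.
  - intros t Ht. apply (pos_neg_independent l); auto. rewrite EP; simpl; auto.
  - assert (E : h = qsum (t1 :: l')).
    { change (qsum (t1 :: l')) with (qadd (qscale (t_lam t1) (term_pow4 t1)) (qsum l')).
      rewrite Split, S'. apply Quartic_ext; simpl; ring. }
    rewrite E. apply classified_of_sum4. simpl; lia.
Qed.

Lemma classified_opp (h : Quartic) : classified (qscale (-1) h) -> classified h.
Proof.
  intros [S|[l [Hr [H [Cp Cn]]]]]; [left; apply small_rep_opp; auto|].
  right. exists (negL l). rewrite <- (qscale_opp_involutive h).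
  split; [apply represents_negL; auto|split; [apply pairwise_indep_negL; auto|]].
  rewrite cntpos_negL, cntneg_negL; auto.
Qed.

Lemma classified_of_honest5 (h : Quartic) (l : list term) :
  represents h l -> pairwise_indep l -> (length l <= 5)%nat -> classified h.
Proof.
  intros Hr H Len.
  destruct (le_lt_dec (length l) 4) as [Le|Gt]; [apply (classified_of_honest4 h l); auto|].
  assert (LS := count_split l (proj1 Hr)).
  destruct (le_lt_dec (cntpos l) 1); [left; apply (few_pos_small h l); auto|].
  destruct (le_lt_dec (cntneg l) 1); [left; apply (few_neg_small h l); auto|].
  destruct (Nat.eq_dec (cntpos l) 2).
  - apply (two_three_classified h l); auto; lia.
  - apply classified_opp, (two_three_classified _ (negL l)).
    + apply represents_negL; auto.
    + apply pairwise_indep_negL; auto.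
    + rewrite cntpos_negL; lia.
    + rewrite cntneg_negL; lia.
Qed.

Lemma every_quartic_classified (h : Quartic) : classified h.
Proof.
  set (l5 := (m3 h - m1 h) / 6).
  set (d := m1 h - 2 * l5). set (e := m2 h - 4 * l5).
  set (L := [(m0 h - e - l5, 1, 0); (m4 h - e - 16 * l5, 0, 1); ((d + e) / 2, 1, 1);
             ((e - d) / 2, 1, -1); (l5, 1, 2)]).
  assert (E : qsum L = h).
  { apply Quartic_ext; unfold L, d, e, l5; simpl; unfold term_pow4, t_lam, t_alpha, t_beta;
      simpl; field. }
  destruct (make_honest L) as [l' [C [H [Len S]]]].
  apply (classified_of_honest5 h l').
  - split; [intros t Ht; apply C; auto|congruence].
  - auto.
  - unfold L in Len; simpl in Len; lia.
Qed.

Lemma in_B_iff (p : F24) (s : nat * nat) :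
  in_B p s <-> exists l, represents (coords p) l /\ pairwise_indep l /\ (cntpos l, cntneg l) = s.
Proof.
  unfold in_B, is_honest_rep. split.
  - intros [l [[Hr Hh] Hb]]. exists l.
    rewrite is_rep_represents in Hr. rewrite honest_pairwise_indep in Hh. auto.
  - intros [l [Hr [Hh Hb]]]. exists l. rewrite is_rep_represents, honest_pairwise_indep. auto.
Qed.

Lemma least_badge_unique_signature (p : F24) (s0 : nat * nat) :
  in_B p s0 -> (forall s, in_B p s -> badge_le s0 s) -> exists! s, is_signature p s.
Proof.
  intros H0 Hmin. exists s0. split.
  - split; auto. intros s' Hs' Hle. specialize (Hmin s' Hs').
    destruct s0, s'; unfold badge_le in *; simpl in *. f_equal; lia.
  - intros s [Hs Hsmin]. apply Hsmin; auto.
Qed.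

Theorem theorem4p1 : forall p : F24, exists! s : nat * nat, is_signature p s.
Proof.
  intros p. set (h := coords p).
  destruct (classic (exists l, small_rep h l)) as [[l0 S]|NS].
  -
    apply (least_badge_unique_signature p (cntpos l0, cntneg l0)).
    + apply in_B_iff. exists l0. destruct S as [C [H [_ E]]].
      split; [split; [intros t Ht; apply C; auto|auto]|auto].
    + intros s Hs. apply in_B_iff in Hs. destruct Hs as [l [Hr [_ <-]]].
      split; [apply (small_rep_min_pos h l0 l)|apply (small_rep_min_neg h l0 l)]; auto.
  - (* otherwise (2,2) is attained, and every honest badge has both entries >= 2 *)
    destruct (every_quartic_classified h) as [S|[l [Hr [Hh [Cp Cn]]]]]; [contradiction|].
    apply (least_badge_unique_signature p (2%nat, 2%nat)).
    + apply in_B_iff. exists l. rewrite Cp, Cn. auto.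
    + intros s Hs. apply in_B_iff in Hs. destruct Hs as [l' [Hr' [Hh' <-]]].
      split; simpl.
      * destruct (le_lt_dec 2 (cntpos l')) as [ok|lt]; auto.
        exfalso. apply NS, (few_pos_small h l'); auto. lia.
      * destruct (le_lt_dec 2 (cntneg l')) as [ok|lt]; auto.
        exfalso. apply NS, (few_neg_small h l'); auto. lia.
Qed.
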